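(* Let $(X,d)$ be a metric space and let $u, u_1, u_2, \ldots \in F_{USC}(X)$. Then $u_n \stackrel{\Gamma}{\longrightarrow} u$ if and only if for all $\alpha \in (0,1]$, $$\overline{\{u>\alpha\}} \subseteq \liminf_{n\to\infty}[u_n]_\alpha \subseteq \limsup_{n\to\infty}[u_n]_\alpha \subseteq [u]_\alpha .$$
   Context: A fuzzy set on $X$ is a function $u:X\to[0,1]$. Its $\alpha$-cuts are $[u]_\alpha=\{x\in X: u(x)\ge\alpha\}$ for $\alpha\in(0,1]$ and $[u]_0=\overline{\{x: u(x)>0\}}$. $F_{USC}(X)$ is the set of fuzzy sets $u$ on $X$ such that $[u]_\alpha$ is a non-empty closed subset of $X$ for every $\alpha\in[0,1]$. For a sequence of sets $C_n\subseteq X$: $\liminf_{n} C_n=\{x\in X: x=\lim_n x_n,\ x_n\in C_n\}$ and $\limsup_n C_n=\{x\in X: x=\lim_j x_{n_j},\ x_{n_j}\in C_{n_j}\text{ for some subsequence}\}$; $C_n$ Kuratowski converges to $C$ if $C=\liminf_n C_n=\limsup_n C_n$. The endograph of $u$ is ${\rm end}\,u=\{(x,t)\in X\times[0,1]: u(x)\ge t\}$, and $X\times[0,1]$ carries the metric $\overline{d}((x,\alpha),(y,\beta))=d(x,y)+|\alpha-\beta|$. We say $u_n$ $\Gamma$-converges to $u$, written $u_n\stackrel{\Gamma}{\longrightarrow}u$, if ${\rm end}\,u_n$ Kuratowski converges to ${\rm end}\,u$ in $(X\times[0,1],\overline{d})$. *)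

From Stdlib Require Import Reals.
Open Scope R_scope.

Definition is_metric {T : Type} (d : T -> T -> R) : Prop :=
  (forall x y, 0 <= d x y) /\
  (forall x y, d x y = 0 <-> x = y) /\
  (forall x y, d x y = d y x) /\
  (forall x y z, d x z <= d x y + d y z).

Definition seq_lim {T : Type} (d : T -> T -> R) (s : nat -> T) (x : T) : Prop :=
  forall eps, 0 < eps -> exists N : nat, forall n, (N <= n)%nat -> d (s n) x < eps.

Definition closure {T : Type} (d : T -> T -> R) (S : T -> Prop) : T -> Prop :=
  fun x => forall eps, 0 < eps -> exists y, S y /\ d x y < eps.

Definition closed {T : Type} (d : T -> T -> R) (S : T -> Prop) : Prop :=
  forall x, closure d S x -> S x.

Definition nonempty {T : Type} (S : T -> Prop) : Prop := exists x, S x.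

Definition subset {T : Type} (A B : T -> Prop) : Prop := forall x, A x -> B x.

Definition set_eq {T : Type} (A B : T -> Prop) : Prop := forall x, A x <-> B x.

Definition acut {X : Type} (u : X -> R) (a : R) : X -> Prop := fun x => a <= u x.

Definition cut0 {X : Type} (d : X -> X -> R) (u : X -> R) : X -> Prop :=
  closure d (fun x => 0 < u x).

Definition FUSC {X : Type} (d : X -> X -> R) (u : X -> R) : Prop :=
  (forall x, 0 <= u x <= 1) /\
  (forall a, 0 < a <= 1 -> nonempty (acut u a) /\ closed d (acut u a)) /\
  nonempty (cut0 d u) /\ closed d (cut0 d u).

Definition Kliminf {T : Type} (d : T -> T -> R) (C : nat -> T -> Prop) : T -> Prop :=
  fun x => exists s : nat -> T, (forall n, C n (s n)) /\ seq_lim d s x.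

Definition Klimsup {T : Type} (d : T -> T -> R) (C : nat -> T -> Prop) : T -> Prop :=
  fun x => exists (phi : nat -> nat) (s : nat -> T),
    (forall j, (phi j < phi (S j))%nat) /\ (forall j, C (phi j) (s j)) /\ seq_lim d s x.

Definition Kconv {T : Type} (d : T -> T -> R) (C : nat -> T -> Prop) (D : T -> Prop) : Prop :=
  set_eq D (Kliminf d C) /\ set_eq D (Klimsup d C).

Definition I01 : Type := { t : R | 0 <= t <= 1 }.

Definition dbar {X : Type} (d : X -> X -> R) (p q : X * I01) : R :=
  d (fst p) (fst q) + Rabs (proj1_sig (snd p) - proj1_sig (snd q)).

Definition endo {X : Type} (u : X -> R) : X * I01 -> Prop :=
  fun p => proj1_sig (snd p) <= u (fst p).

Definition Gamma_conv {X : Type} (d : X -> X -> R) (us : nat -> X -> R) (u : X -> R) : Prop :=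
  Kconv (dbar d) (fun n => endo (us n)) (endo u).

(* If u_n Gamma-converges to u, a point (y, u y) of end u with u y > a is a limit of
   points of end u_n whose levels eventually exceed a; projecting them gives points
   of [u_n]_a converging to y, and Kuratowski lower limits are closed. Conversely,
   if (x, t) lies in the upper limit of the endographs, then x lies in the upper
   limit of [u_n]_b for every b < t, so u x >= t; and a point (x, t) of end u with
   t > 0 is the limit of points (x, b), b < t, lifted from the lower limits of the
   cuts [u_n]_b, which contain x since x lies in the closure of {u > b}. *)

From Stdlib Require Import Reals Lra Lia Classical IndefiniteDescription.
Open Scope R_scope.

Lemma exists_best_upto {T : Type} (C : T -> Prop) (P : nat -> T -> Prop) :
  (forall k m z, (k <= m)%nat -> P m z -> P k z) -> (exists y, C y) ->
  forall m, exists y, C y /\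
    forall k, (k < m)%nat -> (exists z, C z /\ P k z) -> P k y.
Proof.
  intros P_antitone [y0 Cy0] m; induction m as [|m [y [Cy y_best]]].
  - exists y0; split; [exact Cy0 | intros k Hk; lia].
  - destruct (classic (exists z, C z /\ P m z)) as [[z [Cz Pz]] | no_z].
    + exists z; split; [exact Cz |].
      intros k Hk _; apply (P_antitone k m); [lia | exact Pz].
    + exists y; split; [exact Cy |].
      intros k Hk ex_z; destruct (Nat.eq_dec k m) as [-> | Hkm].
      * contradiction.
      * apply y_best; [lia | exact ex_z].
Qed.

Section Kuratowski.

Context {T : Type} (dT : T -> T -> R).

Definition eventually_near (C : nat -> T -> Prop) (x : T) : Prop :=
  forall eps, 0 < eps -> exists N : nat, forall n, (N <= n)%nat ->
    exists y, C n y /\ dT y x < eps.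

Lemma Kliminf_Klimsup C x : Kliminf dT C x -> Klimsup dT C x.
Proof.
  intros [s [Cs lim_s]]; exists (fun j => j), s.
  split; [intro j; lia | split; assumption].
Qed.

Lemma Kconv_of_subsets C D :
  subset D (Kliminf dT C) -> subset (Klimsup dT C) D -> Kconv dT C D.
Proof.
  intros D_inf sup_D; split; intro x; split.
  - apply D_inf.
  - intro Hx; apply sup_D, Kliminf_Klimsup, Hx.
  - intro Hx; apply Kliminf_Klimsup, D_inf, Hx.
  - apply sup_D.
Qed.

Lemma Kliminf_eventually_near C x : Kliminf dT C x -> eventually_near C x.
Proof.
  intros [s [Cs lim_s]] eps Heps; destruct (lim_s eps Heps) as [N HN].
  exists N; intros n Hn; exists (s n); split; [apply Cs | apply HN, Hn].
Qed.

(* For each n we pick a point of C n that is within 1/(k+1) of x for every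
   k <= n for which C n has such a point at all. *)
Lemma eventually_near_Kliminf C x :
  (forall n, nonempty (C n)) -> eventually_near C x -> Kliminf dT C x.
Proof.
  intros C_ne near_x.
  assert (best : forall n, {y | C n y /\ forall k, (k < S n)%nat ->
            (exists z, C n z /\ dT z x < / INR (S k)) -> dT y x < / INR (S k)}).
  { intro n; apply constructive_indefinite_description, exists_best_upto;
      [| apply C_ne].
    intros k m z Hkm Hz.
    enough (/ INR (S m) <= / INR (S k)) by lra.
    apply Rinv_le_contravar; [apply lt_0_INR; lia | apply le_INR; lia]. }
  exists (fun n => proj1_sig (best n)); split.
  - intro n; exact (proj1 (proj2_sig (best n))).
  - intros eps Heps.
    destruct (archimed_cor1 eps Heps) as [[|k] [Hk Hk0]]; [lia |].
    destruct (near_x (/ INR (S k))) as [N HN];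
      [apply Rinv_0_lt_compat, lt_0_INR; lia |].
    exists (Nat.max N k); intros n Hn.
    enough (dT (proj1_sig (best n)) x < / INR (S k)) by lra.
    apply (proj2 (proj2_sig (best n))); [lia | apply HN; lia].
Qed.

Lemma Klimsup_of_tail C x (phi : nat -> nat) (s : nat -> T) (K : nat) :
  (forall j, (phi j < phi (S j))%nat) ->
  (forall j, (K <= j)%nat -> C (phi j) (s j)) ->
  seq_lim dT s x -> Klimsup dT C x.
Proof.
  intros phi_incr Cs lim_s.
  exists (fun j => phi (j + K)%nat), (fun j => s (j + K)%nat); split; [| split].
  - intro j; apply phi_incr.
  - intro j; apply Cs; lia.
  - intros eps Heps; destruct (lim_s eps Heps) as [N HN].
    exists N; intros n Hn; apply HN; lia.
Qed.

Hypothesis dT_sym : forall x y, dT x y = dT y x.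
Hypothesis dT_triangle : forall x y z, dT x z <= dT x y + dT y z.

Lemma closure_sub_Kliminf C S :
  (forall n, nonempty (C n)) -> subset S (Kliminf dT C) ->
  subset (closure dT S) (Kliminf dT C).
Proof.
  intros C_ne S_inf x x_cl; apply eventually_near_Kliminf; [exact C_ne |].
  intros eps Heps.
  destruct (x_cl (eps / 2)) as [y [Sy Hxy]]; [lra |].
  destruct (Kliminf_eventually_near C y (S_inf y Sy) (eps / 2)) as [N HN]; [lra |].
  exists N; intros n Hn; destruct (HN n Hn) as [z [Cz Hzy]].
  exists z; split; [exact Cz |].
  pose proof (dT_triangle z y x); rewrite (dT_sym y x) in *; lra.
Qed.

End Kuratowski.

Section Endograph.

Variables (X : Type) (d : X -> X -> R).
Hypothesis d_nonneg : forall x y, 0 <= d x y.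

Lemma dbar_sym :
  (forall x y, d x y = d y x) -> forall p q, dbar d p q = dbar d q p.
Proof. intros d_sym p q; unfold dbar; rewrite d_sym, Rabs_minus_sym; reflexivity. Qed.

Lemma dbar_triangle :
  (forall x y z, d x z <= d x y + d y z) ->
  forall p q r, dbar d p r <= dbar d p q + dbar d q r.
Proof.
  intros d_triangle [x [s Hs]] [y [t Ht]] [z [w Hw]]; unfold dbar; simpl.
  pose proof (d_triangle x y z).
  replace (s - w) with ((s - t) + (t - w)) by ring.
  pose proof (Rabs_triang (s - t) (t - w)); lra.
Qed.

Lemma d_fst_le_dbar p q : d (fst p) (fst q) <= dbar d p q.
Proof. unfold dbar; pose proof (Rabs_pos (proj1_sig (snd p) - proj1_sig (snd q))); lra. Qed.

Lemma seq_lim_fst s p :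
  seq_lim (dbar d) s p -> seq_lim d (fun n => fst (s n)) (fst p).
Proof.
  intros lim_s eps Heps; destruct (lim_s eps Heps) as [N HN].
  exists N; intros n Hn; pose proof (d_fst_le_dbar (s n) p); specialize (HN n Hn); lra.
Qed.

Lemma seq_lim_const_level s x (t : I01) :
  seq_lim d s x -> seq_lim (dbar d) (fun n => (s n, t)) (x, t).
Proof.
  intros lim_s eps Heps; destruct (lim_s eps Heps) as [N HN].
  exists N; intros n Hn; unfold dbar; simpl.
  rewrite Rminus_diag, Rabs_R0; specialize (HN n Hn); lra.
Qed.

Lemma endo_near_acut (v : X -> R) (a : R) q p :
  endo v q -> dbar d q p < proj1_sig (snd p) - a -> acut v a (fst q).
Proof.
  unfold endo, acut, dbar; intros Hq Hqp.
  pose proof (d_nonneg (fst q) (fst p)).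
  pose proof (Rle_abs (proj1_sig (snd p) - proj1_sig (snd q))) as Hle.
  rewrite Rabs_minus_sym in Hle; lra.
Qed.

Variable us : nat -> X -> R.

Local Notation cuts a := (fun n => acut (us n) a).
Local Notation endos := (fun n => endo (us n)).

Lemma eventually_near_endo_acut p a :
  eventually_near (dbar d) endos p -> a < proj1_sig (snd p) ->
  eventually_near d (cuts a) (fst p).
Proof.
  intros near_p Ha eps Heps.
  destruct (near_p (Rmin eps (proj1_sig (snd p) - a))) as [N HN];
    [apply Rmin_pos; lra |].
  pose proof (Rmin_l eps (proj1_sig (snd p) - a)).
  pose proof (Rmin_r eps (proj1_sig (snd p) - a)).
  exists N; intros n Hn; destruct (HN n Hn) as [q [Hq Hqp]].
  exists (fst q); split.
  - apply (endo_near_acut _ _ q p); [exact Hq | lra].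
  - pose proof (d_fst_le_dbar q p); lra.
Qed.

Lemma Klimsup_endo_acut p a :
  Klimsup (dbar d) endos p -> a < proj1_sig (snd p) -> Klimsup d (cuts a) (fst p).
Proof.
  intros [phi [s [phi_incr [Hs lim_s]]]] Ha.
  destruct (lim_s (proj1_sig (snd p) - a)) as [K HK]; [lra |].
  apply (Klimsup_of_tail _ _ _ phi (fun j => fst (s j)) K phi_incr).
  - intros j Hj; apply (endo_near_acut _ _ (s j) p); [apply Hs | apply HK, Hj].
  - apply seq_lim_fst, lim_s.
Qed.

Lemma Kliminf_acut_endo x (t : I01) :
  Kliminf d (cuts (proj1_sig t)) x -> Kliminf (dbar d) endos (x, t).
Proof.
  intros [s [Hs lim_s]]; exists (fun n => (s n, t)); split.
  - intro n; apply Hs.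
  - apply seq_lim_const_level, lim_s.
Qed.

Lemma Klimsup_acut_endo x (t : I01) :
  Klimsup d (cuts (proj1_sig t)) x -> Klimsup (dbar d) endos (x, t).
Proof.
  intros [phi [s [phi_incr [Hs lim_s]]]].
  exists phi, (fun j => (s j, t)); split; [exact phi_incr | split].
  - intro j; apply Hs.
  - apply seq_lim_const_level, lim_s.
Qed.

End Endograph.

Section GammaCuts.

Context {X : Type} (d : X -> X -> R) (u : X -> R) (us : nat -> X -> R).
Hypothesis d_metric : is_metric d.
Hypothesis u_range : forall x, 0 <= u x <= 1.
Hypothesis us_nonneg : forall n x, 0 <= us n x.
Hypothesis us_acut_nonempty : forall n a, 0 < a <= 1 -> nonempty (acut (us n) a).

Local Notation cuts a := (fun n => acut (us n) a).
Local Notation endos := (fun n => endo (us n)).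

Lemma Gamma_conv_closure_sub_Kliminf_acut a :
  Gamma_conv d us u -> 0 < a <= 1 ->
  subset (closure d (fun x => a < u x)) (Kliminf d (cuts a)).
Proof.
  destruct d_metric as [d_nonneg [_ [d_sym d_triangle]]].
  intros [Gamma_inf _] Ha.
  assert (cuts_ne : forall n, nonempty (acut (us n) a))
    by (intro n; apply us_acut_nonempty, Ha).
  apply closure_sub_Kliminf; [exact d_sym | exact d_triangle | exact cuts_ne |].
  intros y Hy; apply eventually_near_Kliminf; [exact cuts_ne |].
  apply (eventually_near_endo_acut X d d_nonneg us (y, exist _ (u y) (u_range y)));
    [| exact Hy].
  apply Kliminf_eventually_near, Gamma_inf; unfold endo; simpl; lra.
Qed.

Lemma Gamma_conv_Klimsup_acut_sub a :
  Gamma_conv d us u -> 0 < a <= 1 -> subset (Klimsup d (cuts a)) (acut u a).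
Proof.
  intros [_ Gamma_sup] Ha x Hx.
  assert (Ha01 : 0 <= a <= 1) by lra.
  exact (proj2 (Gamma_sup (x, exist _ a Ha01)) (Klimsup_acut_endo X d us x (exist _ a Ha01) Hx)).
Qed.

Lemma endo_sub_Kliminf_endo :
  (forall a, 0 < a <= 1 ->
     subset (closure d (fun x => a < u x)) (Kliminf d (cuts a))) ->
  subset (endo u) (Kliminf (dbar d) endos).
Proof.
  destruct d_metric as [d_nonneg [d_zero [d_sym d_triangle]]].
  intros cut_inf [x [t Ht]] Hxt; unfold endo in Hxt; simpl in Hxt.
  assert (d_refl : d x x = 0) by (apply d_zero; reflexivity).
  destruct (Rle_or_lt t 0) as [Ht0 | Ht0].
  - exists (fun _ => (x, exist _ t Ht)); split.
    + intro n; unfold endo; simpl; pose proof (us_nonneg n x); lra.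
    + intros eps Heps; exists 0%nat; intros n _; unfold dbar; simpl.
      rewrite d_refl, Rminus_diag, Rabs_R0; lra.
  - assert (zero01 : 0 <= 0 <= 1) by lra.
    apply (closure_sub_Kliminf (dbar d) (dbar_sym X d d_sym) (dbar_triangle X d d_triangle)
             _ (Kliminf (dbar d) endos)); [| intros p Hp; exact Hp |].
    { intro n; exists (x, exist _ 0 zero01); unfold endo; simpl; apply us_nonneg. }
    intros eps Heps.
    pose proof (Rmin_l eps t); pose proof (Rmin_r eps t); pose proof (Rmin_pos eps t Heps Ht0).
    assert (b01 : 0 <= t - Rmin eps t / 2 <= 1) by lra.
    exists (x, exist _ (t - Rmin eps t / 2) b01); split.
    + apply Kliminf_acut_endo, cut_inf; simpl; [lra |].
      intros e He; exists x; rewrite d_refl; split; lra.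
    + unfold dbar; simpl; rewrite d_refl, Rabs_right; lra.
Qed.

Lemma Klimsup_endo_sub_endo :
  (forall a, 0 < a <= 1 -> subset (Klimsup d (cuts a)) (acut u a)) ->
  subset (Klimsup (dbar d) endos) (endo u).
Proof.
  destruct d_metric as [d_nonneg _].
  intros cut_sup [x [t Ht]] Hsup; unfold endo; simpl.
  destruct (Rle_or_lt t (u x)) as [Hle | Hlt]; [exact Hle | exfalso].
  pose proof (u_range x).
  enough (acut u ((u x + t) / 2) x) by (unfold acut in *; lra).
  apply cut_sup; [lra |].
  apply (Klimsup_endo_acut X d d_nonneg us (x, exist _ t Ht)); [exact Hsup | simpl; lra].
Qed.

End GammaCuts.

Theorem theorem3p4 (X : Type) (d : X -> X -> R) (Hd : is_metric d)
  (u : X -> R) (us : nat -> X -> R)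
  (Hu : FUSC d u) (Hus : forall n, FUSC d (us n)) :
  Gamma_conv d us u <->
  (forall a, 0 < a <= 1 ->
     subset (closure d (fun x => a < u x)) (Kliminf d (fun n => acut (us n) a)) /\
     subset (Kliminf d (fun n => acut (us n) a)) (Klimsup d (fun n => acut (us n) a)) /\
     subset (Klimsup d (fun n => acut (us n) a)) (acut u a)).
Proof.
  destruct Hu as [u_range _].
  assert (us_nonneg : forall n x, 0 <= us n x) by (intros n x; apply (proj1 (Hus n) x)).
  assert (us_acut_nonempty : forall n a, 0 < a <= 1 -> nonempty (acut (us n) a))
    by (intros n a Ha; apply (proj1 (proj2 (Hus n)) a Ha)).
  split.
  - intros Gamma a Ha; split; [| split].
    + exact (Gamma_conv_closure_sub_Kliminf_acut d u us Hd u_range us_acut_nonempty a Gamma Ha).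
    + intro x; apply Kliminf_Klimsup.
    + exact (Gamma_conv_Klimsup_acut_sub d u us a Gamma Ha).
  - intros cut_bounds; apply Kconv_of_subsets.
    + apply (endo_sub_Kliminf_endo d u us Hd us_nonneg).
      intros a Ha; apply cut_bounds, Ha.
    + apply (Klimsup_endo_sub_endo d u us Hd u_range).
      intros a Ha; apply cut_bounds, Ha.
Qed.
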